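(* $\mathrm{DCFL}\not\subseteq \mathrm{REG}/n$. Equivalently, $\mathrm{REG}/n\neq\mathrm{DCFL}/n$.
   Context: $\mathrm{REG}$ is the family of regular languages and $\mathrm{DCFL}$ the family of deterministic context-free languages. An advice function is a map $h:\mathbb{N}\to\Gamma^*$, for some alphabet $\Gamma$, with $|h(n)|=n$ for all $n$. For strings $x=x_1\cdots x_n$ and $w=\sigma_1\cdots\sigma_n$ of the same length, $\begin{bmatrix}x\\ w\end{bmatrix}$ denotes the string $\begin{bmatrix}x_1\\ \sigma_1\end{bmatrix}\cdots\begin{bmatrix}x_n\\ \sigma_n\end{bmatrix}$ over the product alphabet of pairs of symbols. For a family $\mathcal{C}$ of languages, $\mathcal{C}/n$ is the family of all languages $L$ over an alphabet $\Sigma$ for which there exist an advice function $h$ and a language $L'\in\mathcal{C}$ such that for all $x\in\Sigma^*$: $x\in L$ iff $\begin{bmatrix}x\\ h(|x|)\end{bmatrix}\in L'$. *)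

From mathcomp Require Import all_boot.
From Stdlib Require Import Relations.Relation_Operators.


Definition lang (Sigma : finType) := seq Sigma -> Prop.

Definition lang_family := forall Sigma : finType, lang Sigma -> Prop.

Record DFA (Sigma : finType) := {
  dfa_state : finType;
  dfa_start : dfa_state;
  dfa_delta : dfa_state -> Sigma -> dfa_state;
  dfa_final : pred dfa_state
}.
Arguments dfa_state {Sigma} _.
Arguments dfa_start {Sigma} _.
Arguments dfa_delta {Sigma} _ _ _.
Arguments dfa_final {Sigma} _ _.

Definition dfa_accepts {Sigma : finType} (A : DFA Sigma) (w : seq Sigma) : bool :=
  dfa_final A (foldl (dfa_delta A) (dfa_start A) w).

Definition REG : lang_family :=
  fun Sigma L => exists A : DFA Sigma, forall w, L w <-> dfa_accepts A w.

Record DPDA (Sigma : finType) := {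
  pda_state : finType;
  pda_stack : finType;
  pda_start : pda_state;
  pda_bottom : pda_stack;
  pda_final : pred pda_state;
  (* delta q (Some a) Z / delta q None Z : at most one move (determinism in
     the choice of move is built into the option type) *)
  pda_delta : pda_state -> option Sigma -> pda_stack ->
              option (pda_state * seq pda_stack);
  pda_det : forall q Z, pda_delta q None Z <> None ->
              forall a, pda_delta q (Some a) Z = None
}.
Arguments pda_state {Sigma} _.
Arguments pda_stack {Sigma} _.
Arguments pda_start {Sigma} _.
Arguments pda_bottom {Sigma} _.
Arguments pda_final {Sigma} _ _.
Arguments pda_delta {Sigma} _ _ _ _.
Arguments pda_det {Sigma} _ _ _ _ _.

Section DPDASem.
Context {Sigma : finType} (M : DPDA Sigma).

(* configuration: (state, remaining input, stack with top at the head) *)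
Definition pda_config := (pda_state M * seq Sigma * seq (pda_stack M))%type.

Inductive pda_step : pda_config -> pda_config -> Prop :=
| step_read q a w Z gam p alpha :
    pda_delta M q (Some a) Z = Some (p, alpha) ->
    pda_step (q, a :: w, Z :: gam) (p, w, alpha ++ gam)
| step_eps q w Z gam p alpha :
    pda_delta M q None Z = Some (p, alpha) ->
    pda_step (q, w, Z :: gam) (p, w, alpha ++ gam).

Definition pda_reach := @clos_refl_trans pda_config pda_step.

Definition dpda_accepts (w : seq Sigma) : Prop :=
  exists (q : pda_state M) (gam : seq (pda_stack M)),
    pda_reach (pda_start M, w, [:: pda_bottom M]) (q, [::], gam) /\ pda_final M q.
End DPDASem.

Definition DCFL : lang_family :=
  fun Sigma L => exists M : DPDA Sigma, forall w, L w <-> dpda_accepts M w.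

(* [x ; w] over the product alphabet: zip of two equal-length words. *)
Definition with_advice (C : lang_family) : lang_family :=
  fun Sigma L =>
    exists (Gamma : finType) (h : nat -> seq Gamma) (L' : lang (prod Sigma Gamma)),
      (forall n, size (h n) = n) /\ C _ L' /\
      forall x : seq Sigma, L x <-> L' (zip x (h (size x))).

(* The language { 1^a 0^n 1^n 0^b : n > 0 } is accepted by a real-time DPDA that
   pushes the zeros and pops one symbol per following one.  Against it, the
   words 1^(m-i) 0^i, i = 1..m, are pairwise distinguishable by the suffixes
   1^j 0^(m-j): the only suffix completing 1^(m-i) 0^i is the one with j = i.
   All these words have length 2m, so they share the same advice string, and a
   DFA reading the first halves must reach m distinct states.  No fixed DFA
   can do this for every m. *)

From HB Require Import structures.
From mathcomp Require Import all_boot.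
From Stdlib Require Import Relations.Relation_Operators Relations.Operators_Properties Setoid.

Section RealTimeDPDA.

Context {Sigma : finType} (M : DPDA Sigma).

Definition rt_read (c : option (pda_state M * seq (pda_stack M))) (a : Sigma) :=
  if c is Some (q, Z :: gam) then
    if pda_delta M q (Some a) Z is Some (p, alpha) then Some (p, alpha ++ gam)
    else None
  else None.

Definition rt_run := foldl rt_read.

Lemma rt_run_None w : rt_run None w = None.
Proof. by elim: w. Qed.

Lemma rt_run_cons c a w : rt_run c (a :: w) = rt_run (rt_read c a) w.
Proof. by []. Qed.

Lemma rt_run_cat c u v : rt_run c (u ++ v) = rt_run (rt_run c u) v.
Proof. exact: foldl_cat. Qed.

Definition rt_accepts (w : seq Sigma) : bool :=
  if rt_run (Some (pda_start M, [:: pda_bottom M])) w is Some (q, _)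
  then pda_final M q else false.

Hypothesis no_eps : forall q Z, pda_delta M q None Z = None.

Lemma pda_reach_rt_run (c c' : pda_config M) : pda_reach M c c' ->
  exists2 u, c.1.2 = u ++ c'.1.2 & rt_run (Some (c.1.1, c.2)) u = Some (c'.1.1, c'.2).
Proof.
move=> /clos_rt_rt1n_iff; elim=> [[[q w] st] | c1 c2 c3 step _ [u eq_w run_u]].
  by exists [::].
case: step eq_w run_u => [q a w Z gam p alpha delta_a | q w Z gam p alpha].
  by move=> /= -> run_u; exists (a :: u) => //=; rewrite delta_a.
by rewrite no_eps.
Qed.

Lemma rt_run_pda_reach u w q st q' st' :
  rt_run (Some (q, st)) u = Some (q', st') -> pda_reach M (q, u ++ w, st) (q', w, st').
Proof.
elim: u q st => [|a u IHu] q st /=; first by case=> -> ->; apply: rt_refl.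
case: st => [|Z gam]; first by rewrite rt_run_None.
case delta_a: (pda_delta M q (Some a) Z) => [[p alpha]|]; last by rewrite rt_run_None.
by move=> /IHu; apply: rt_trans; apply: rt_step; apply: step_read.
Qed.

Lemma dpda_acceptsE w : dpda_accepts M w <-> rt_accepts w.
Proof.
rewrite /rt_accepts; split.
  by case=> q [gam [/pda_reach_rt_run [u /= ->]]]; rewrite cats0 => -> .
case run_w: rt_run => [[q gam]|] // final_q; exists q, gam; split=> //.
by rewrite -[w]cats0; apply: rt_run_pda_reach.
Qed.

End RealTimeDPDA.

Arguments rt_run : simpl never.

Lemma with_advice_REG_fooling_set {Sigma : finType} {L : lang Sigma} :
  with_advice REG Sigma L ->
  exists c, forall (I : finType) (x y : I -> seq Sigma) p q,
    (forall i, size (x i) = p) -> (forall i, size (y i) = q) ->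
    (forall i, L (x i ++ y i)) -> (forall i j, i != j -> ~ L (x i ++ y j)) ->
    #|I| <= c.
Proof.
case=> Gamma [h [L' [size_h [[A accA] adviceL]]]].
exists #|dfa_state A| => I x y p q size_x size_y fool_eq fool_neq.
set H := h (p + q).
pose state_after i := foldl (dfa_delta A) (dfa_start A) (zip (x i) (take p H)).
have L_cat i j : L (x i ++ y j) <->
    dfa_final A (foldl (dfa_delta A) (state_after i) (zip (y j) (drop p H))).
  have size_take : size (x i) = size (take p H).
    by rewrite size_x size_takel // size_h leq_addr.
  rewrite adviceL size_cat size_x size_y accA /dfa_accepts -/H.
  by rewrite -{1}(cat_take_drop p H) zip_cat // foldl_cat.
have [/injectiveP inj_state | /injectivePn [i [j neq_ij eq_state]]] :=
  boolP (injectiveb state_after); first exact: leq_card inj_state.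
by case: (fool_neq i j neq_ij); apply/L_cat; rewrite eq_state; apply/L_cat.
Qed.

Inductive phase := Ones | Zeros | Match | Done.

Definition phase_ord (p : phase) : 'I_4 :=
  inord (match p with Ones => 0 | Zeros => 1 | Match => 2 | Done => 3 end).

Definition ord_phase (i : 'I_4) : phase :=
  match val i with 0 => Ones | 1 => Zeros | 2 => Match | _ => Done end.

Lemma phase_ordK : cancel phase_ord ord_phase.
Proof. by case; rewrite /ord_phase /= inordK. Qed.

HB.instance Definition _ := Finite.copy phase (can_type phase_ordK).

(* [Mark] sits under the counters of the zero block, so popping it detects
   that the ones have exactly matched the zeros without an epsilon move. *)
Inductive counter := Bottom | Mark | Count.

Definition counter_ord (Z : counter) : 'I_3 :=
  inord (match Z with Bottom => 0 | Mark => 1 | Count => 2 end).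

Definition ord_counter (i : 'I_3) : counter :=
  match val i with 0 => Bottom | 1 => Mark | _ => Count end.

Lemma counter_ordK : cancel counter_ord ord_counter.
Proof. by case; rewrite /ord_counter /= inordK. Qed.

HB.instance Definition _ := Finite.copy counter (can_type counter_ordK).

Definition balanced_delta (q : phase) (a : option bool) (Z : counter) :
    option (phase * seq counter) :=
  match q, a, Z with
  | Ones, Some true, _ => Some (Ones, [:: Z])
  | Ones, Some false, _ => Some (Zeros, [:: Mark; Z])
  | Zeros, Some false, _ => Some (Zeros, [:: Count; Z])
  | (Zeros | Match), Some true, Mark => Some (Done, [::])
  | (Zeros | Match), Some true, Count => Some (Match, [::])
  | Done, Some false, _ => Some (Done, [:: Z])
  | _, _, _ => None
  end.

Lemma balanced_no_eps q Z : balanced_delta q None Z = None.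
Proof. by case: q. Qed.

Definition balanced_dpda : DPDA bool := {|
  pda_start := Ones;
  pda_bottom := Bottom;
  pda_final := fun q => if q is Done then true else false;
  pda_delta := balanced_delta;
  pda_det := fun q Z eps_move => False_ind _ (eps_move (balanced_no_eps q Z)) |}.

Notation run := (rt_run balanced_dpda).

Lemma run_ones a Z gam :
  run (Some (Ones, Z :: gam)) (nseq a true) = Some (Ones, Z :: gam).
Proof. by elim: a => //= a; rewrite rt_run_cons. Qed.

Lemma run_count n Z gam :
  run (Some (Zeros, Z :: gam)) (nseq n false) =
  Some (Zeros, nseq n Count ++ Z :: gam).
Proof.
elim: n Z gam => // n IHn Z gam; rewrite rt_run_cons IHn.
by congr (Some (_, _)); elim: n {IHn} => //= n ->.
Qed.

Lemma run_zeros n Z gam :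
  run (Some (Ones, Z :: gam)) (nseq n.+1 false) =
  Some (Zeros, nseq n Count ++ Mark :: Z :: gam).
Proof. by rewrite rt_run_cons run_count. Qed.

Definition popping (q : phase) : bool := if q is (Zeros | Match) then true else false.

Lemma run_pop q j k st : popping q ->
  run (Some (q, nseq k Count ++ Mark :: st)) (nseq j.+1 true) =
  if j < k then Some (Match, nseq (k - j.+1) Count ++ Mark :: st)
  else if j == k then Some (Done, st) else None.
Proof.
elim: j q k => [|j IHj] q k popping_q.
  by case: k => [|k]; case: q popping_q; rewrite rt_run_cons /= ?subn1.
have {popping_q}step_one (c : counter) :
    balanced_delta q (Some true) c = balanced_delta Match (Some true) c.
  by case: q popping_q.
rewrite -[nseq j.+2 true]/(true :: nseq j.+1 true) rt_run_cons.
case: k => [|k]; rewrite [rt_read _ _ _]/= step_one [X in rt_run X _]/=.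
  rewrite -[nseq j.+1 _]/(true :: _) rt_run_cons.
  by case: {IHj} st => [|Z gam]; rewrite /= rt_run_None.
by rewrite cat0s (IHj Match) // ltnS eqSS subSS.
Qed.

Lemma run_done b Z gam :
  run (Some (Done, Z :: gam)) (nseq b false) = Some (Done, Z :: gam).
Proof. by elim: b => //= b; rewrite rt_run_cons. Qed.

Lemma run_reject q a w st : balanced_delta q (Some a) =1 (fun _ => None) ->
  run (Some (q, st)) (a :: w) = None.
Proof.
by move=> no_move; rewrite rt_run_cons; case: st => [|Z gam]; rewrite /= ?no_move rt_run_None.
Qed.

Lemma balanced_accepts a i j b :
  dpda_accepts balanced_dpda (nseq a true ++ nseq i.+1 false ++ nseq j.+1 true ++ nseq b false)
  <-> i = j.
Proof.
rewrite dpda_acceptsE; last exact: balanced_no_eps.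
rewrite /rt_accepts !rt_run_cat run_ones // run_zeros run_pop //.
case: ltngtP => [lt_ji | lt_ij | ->]; last by rewrite run_done.
  by case: b => [|b] /=; rewrite ?run_reject //=;
    split=> // eq_ij; move: lt_ji; rewrite eq_ij ltnn.
by rewrite rt_run_None; split=> // eq_ij; move: lt_ij; rewrite eq_ij ltnn.
Qed.

Theorem proposition3p6 :
  ~ (forall (Sigma : finType) (L : lang Sigma),
       DCFL Sigma L -> with_advice REG Sigma L).
Proof.
move=> DCFL_sub_REG_advice.
have [c fool] := with_advice_REG_fooling_set
  (DCFL_sub_REG_advice _ _ (ex_intro _ balanced_dpda (fun w => iff_refl _))).
set m := c.+1.
have size_prefix (i : 'I_m) : size (nseq (m - i.+1) true ++ nseq i.+1 false) = m.
  by rewrite size_cat !size_nseq subnK.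
have size_suffix (j : 'I_m) : size (nseq j.+1 true ++ nseq (m - j.+1) false) = m.
  by rewrite size_cat !size_nseq subnKC.
suff : #|'I_m| <= c by rewrite card_ord ltnn.
apply: (fool 'I_m (fun i => nseq (m - i.+1) true ++ nseq i.+1 false)
  (fun j => nseq j.+1 true ++ nseq (m - j.+1) false) m m size_prefix size_suffix)
  => [i | i j neq_ij]; rewrite -catA.
  exact/balanced_accepts.
by move/balanced_accepts/val_inj=> eq_ij; rewrite eq_ij eqxx in neq_ij.
Qed.
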